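(* If $G$ is a $K_3$-free graph, then $KB(G)=(KB_m(G))^2$ (as graphs on the common vertex set consisting of the bicliques of $G$).
   Context: All graphs are finite and simple. A biclique of a graph $G$ is a set $P\subseteq V(G)$ such that the induced subgraph $G[P]$ is a complete bipartite graph with both parts nonempty, and $P$ is inclusion-maximal with this property. Since $G[P]$ is connected, its bipartition into two nonempty independent sets $X,Y$ (every vertex of $X$ adjacent to every vertex of $Y$) is unique; we write $P=XY$ to mean $P=X\cup Y$ with $X,Y$ these two parts, called the sides of $P$. Two bicliques $P,Q$ of $G$ are mutually included if their sides can be named $P=X_PY_P$, $Q=X_QY_Q$ so that $X_Q\subsetneq X_P$ and $Y_P\subsetneq Y_Q$. The biclique graph $KB(G)$ has the set of bicliques of $G$ as vertex set, two distinct bicliques being adjacent iff they intersect. The mutually included biclique graph $KB_m(G)$ has the same vertex set, two distinct bicliques being adjacent iff they are mutually included. For a graph $H$, the square $H^2$ has vertex set $V(H)$, two distinct vertices being adjacent iff their distance in $H$ is at most $2$. *)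

From mathcomp Require Import all_boot.
Set Implicit Arguments. Unset Strict Implicit. Unset Printing Implicit Defensive.

Section Bicliques.
Variables (T : finType) (e : rel T).

Definition simple_graph : Prop := symmetric e /\ irreflexive e.

Definition K3_free : Prop :=
  forall x y z : T, ~ [/\ e x y, e y z & e x z].

Definition independent (A : {set T}) : Prop :=
  forall x y, x \in A -> y \in A -> ~~ e x y.

Definition sides (X Y : {set T}) : Prop :=
  [/\ X != set0, Y != set0, independent X, independent Y &
      forall x y, x \in X -> y \in Y -> e x y].

Definition cbip (P : {set T}) : Prop :=
  exists X Y, P = X :|: Y /\ sides X Y.

Definition biclique (P : {set T}) : Prop :=
  cbip P /\ forall P' : {set T}, P \proper P' -> ~ cbip P'.

Definition mutually_included (P Q : {set T}) : Prop :=
  exists XP YP XQ YQ : {set T},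
    [/\ P = XP :|: YP, sides XP YP, Q = XQ :|: YQ, sides XQ YQ &
        XQ \proper XP /\ YP \proper YQ].

Definition KB_adj (P Q : {set T}) : Prop :=
  P != Q /\ P :&: Q != set0.

Definition KBm_adj (P Q : {set T}) : Prop :=
  P != Q /\ mutually_included P Q.

Definition KBm_sq_adj (P Q : {set T}) : Prop :=
  P != Q /\
  (KBm_adj P Q \/ exists R : {set T}, [/\ biclique R, KBm_adj P R & KBm_adj R Q]).

End Bicliques.

From mathcomp Require Import all_boot.
Set Implicit Arguments. Unset Strict Implicit. Unset Printing Implicit Defensive.

(* Write N(A) for the common neighbourhood of a vertex set A.
   In a triangle-free graph the sides of a biclique P = XY are closed:
   Y = N(X) and X = N(Y); conversely closed sides always form a biclique.
   For a vertex v lying in some biclique, the "star" S_v = N(N(v)) N(v) is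
   therefore a biclique, and every biclique P with v in a side X_P is either
   S_v or mutually included with it (N(N(v)) is strictly inside X_P, Y_P is
   strictly inside N(v)).
   - If bicliques P, Q meet in v, then P and Q are at distance <= 2 in KB_m(G)
     through S_v (distance 1 when one of them is S_v).
   - Conversely mutually included bicliques share a side element, and for a
     path P - R - Q in KB_m(G) the two namings of the sides of R coincide up
     to swapping (sides of a connected bipartite graph are unique), which
     yields a common vertex of P and Q in both cases. *)

Section Bicliques.
Variables (T : finType) (e : rel T).
Hypothesis e_sym : symmetric e.
Hypothesis e_irr : irreflexive e.

Definition common_nb (A : {set T}) : {set T} := [set z | [forall a in A, e a z]].

Lemma common_nbP (A : {set T}) z :
  reflect (forall a, a \in A -> e a z) (z \in common_nb A).
Proof. rewrite inE; exact: forall_inP. Qed.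

Lemma common_nb1 v z : (z \in common_nb [set v]) = e v z.
Proof.
apply/common_nbP/idP => [|evz a]; first by apply; rewrite inE.
by rewrite inE => /eqP->.
Qed.

Lemma common_nb_anti (A B : {set T}) : A \subset B -> common_nb B \subset common_nb A.
Proof.
move=> /subsetP AB; apply/subsetP => z /common_nbP zB.
by apply/common_nbP => a /AB; exact: zB.
Qed.

Lemma common_nb_ext (A : {set T}) : A \subset common_nb (common_nb A).
Proof.
apply/subsetP => a aA; apply/common_nbP => z /common_nbP zA.
by rewrite e_sym; exact: zA.
Qed.

Lemma common_nb3 (A : {set T}) :
  common_nb (common_nb (common_nb A)) = common_nb A.
Proof.
by apply/eqP; rewrite eqEsubset (common_nb_anti (common_nb_ext A)) common_nb_ext.
Qed.

Lemma sidesC (X Y : {set T}) : sides e X Y -> sides e Y X.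
Proof. by case=> X0 Y0 iX iY XY; split=> // y x yY xX; rewrite e_sym; exact: XY. Qed.

Lemma mutually_included_sym (P Q : {set T}) :
  mutually_included e P Q -> mutually_included e Q P.
Proof.
case=> XP [YP [XQ [YQ [-> sP -> sQ [ltX ltY]]]]].
by exists YQ, XQ, YP, XP; split; rewrite 1?setUC //; exact: sidesC.
Qed.

Lemma sides_grow (X Y X' Y' : {set T}) x :
  sides e X Y -> sides e X' Y' -> X :|: Y \subset X' :|: Y' ->
  x \in X -> x \in X' -> X \subset X' /\ Y \subset Y'.
Proof.
move=> [_ Y0 _ _ XY] [_ _ iX' iY' _] /subsetP sub xX xX'.
have YY' : Y \subset Y'.
  apply/subsetP => y yY; have /sub : y \in X :|: Y by rewrite inE yY orbT.
  rewrite inE => /orP[yX'|//].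
  by move: (iX' _ _ xX' yX'); rewrite XY.
split=> //; apply/subsetP => x1 x1X.
have [y0 y0Y] := set0Pn _ Y0.
have /sub : x1 \in X :|: Y by rewrite inE x1X.
rewrite inE => /orP[//|x1Y'].
by move: (iY' _ _ x1Y' (subsetP YY' _ y0Y)); rewrite XY.
Qed.

Lemma sides_unique (X Y X' Y' : {set T}) :
  sides e X Y -> sides e X' Y' -> X :|: Y = X' :|: Y' ->
  (X = X' /\ Y = Y') \/ (X = Y' /\ Y = X').
Proof.
move=> sXY sXY' eqU; have [X0 _ _ _ _] := sXY; have [x xX] := set0Pn _ X0.
have sub : X :|: Y \subset X' :|: Y' by rewrite eqU.
have sub' : X' :|: Y' \subset X :|: Y by rewrite eqU.
have : x \in X' :|: Y' by rewrite -eqU inE xX.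
rewrite inE => /orP[xX'|xY'].
- have [XX' YY'] := sides_grow sXY sXY' sub xX xX'.
  have [X'X Y'Y] := sides_grow sXY' sXY sub' xX' xX.
  by left; split; apply/eqP; rewrite eqEsubset ?XX' ?YY'.
- rewrite [X' :|: Y']setUC in sub sub'.
  have [XY' YX'] := sides_grow sXY (sidesC sXY') sub xX xY'.
  have [Y'X X'Y] := sides_grow (sidesC sXY') sXY sub' xY' xX.
  by right; split; apply/eqP; rewrite eqEsubset ?XY' ?YX'.
Qed.

Lemma meet_of_common_subset (A P Q : {set T}) :
  A != set0 -> A \subset P -> A \subset Q -> P :&: Q != set0.
Proof.
move=> /set0Pn[a aA] /subsetP AP /subsetP AQ.
by apply/set0Pn; exists a; rewrite inE AP ?AQ.
Qed.

(* Adjacent in KB_m(G) implies intersecting: X_Q lies in both. *)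
Lemma mutually_included_meet (P Q : {set T}) :
  mutually_included e P Q -> P :&: Q != set0.
Proof.
case=> XP [YP [XQ [YQ [-> _ -> [XQ0 _ _ _ _] [/proper_sub XQP _]]]]].
by apply: (meet_of_common_subset XQ0); rewrite ?subsetUl // (subset_trans XQP) ?subsetUl.
Qed.

Lemma mutually_included_path_meet (P R Q : {set T}) :
  mutually_included e P R -> mutually_included e R Q -> P :&: Q != set0.
Proof.
case=> XP [YP [XR [YR [-> _ eR sR [/proper_sub XRP _]]]]].
case=> XR' [YR' [XQ [YQ [eR' sR' -> [XQ0 _ _ _ _] [/proper_sub XQR' /proper_sub YR'Q]]]]].
have [XR0 _ _ _ _] := sR.
case: (sides_unique sR sR' (etrans (esym eR) eR')) => [[EX _]|[EX _]].
- apply: (meet_of_common_subset XQ0); last exact: subsetUl.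
  by rewrite subsetU // (subset_trans XQR') -?EX ?XRP.
- apply: (meet_of_common_subset XR0); first by rewrite subsetU ?XRP.
  by rewrite subsetU // EX YR'Q orbT.
Qed.

Hypothesis e_K3 : K3_free e.

Lemma sides_extend (X Y : {set T}) z :
  sides e X Y -> z \in common_nb X -> sides e X (z |: Y).
Proof.
move=> [X0 Y0 iX iY XY] /common_nbP zX; have [x0 x0X] := set0Pn _ X0.
split=> //; first by apply/set0Pn; exists z; rewrite !inE eqxx.
- move=> a b; rewrite !inE => /orP[/eqP->|aY] /orP[/eqP->|bY].
  + by rewrite e_irr.
  + by apply/negP => ezb; apply: (e_K3 (x := x0) (y := z) (z := b)); split; auto.
  + apply/negP => eaz; apply: (e_K3 (x := x0) (y := z) (z := a)).
    by split; [auto | rewrite e_sym | auto].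
  + exact: iY.
- by move=> a b aX; rewrite !inE => /orP[/eqP->|bY]; [exact: zX | exact: XY].
Qed.

Lemma biclique_closed (P X Y : {set T}) :
  biclique e P -> P = X :|: Y -> sides e X Y -> Y = common_nb X.
Proof.
move=> [_ maxP] eP sXY; have [X0 _ iX _ XY] := sXY.
apply/eqP; rewrite eqEsubset; apply/andP; split.
  by apply/subsetP => y yY; apply/common_nbP => x xX; exact: XY.
apply/subsetP => z zN; apply/negPn/negP => zY.
have [x0 x0X] := set0Pn _ X0.
have zX : z \notin X by apply/negP => zX; move: (iX _ _ x0X zX); rewrite (common_nbP _ _ zN).
apply: (maxP (X :|: (z |: Y))); last by exists X, (z |: Y); split; last exact: sides_extend.
apply/properP; split; first by rewrite eP setUS // subsetUr.
by exists z; rewrite ?eP !inE ?eqxx ?orbT // negb_or zX.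
Qed.

Lemma closed_sides_max (X Y X' Y' : {set T}) x :
  sides e X Y -> Y = common_nb X -> X = common_nb Y -> sides e X' Y' ->
  X :|: Y \subset X' :|: Y' -> x \in X -> x \in X' -> X' :|: Y' \subset X :|: Y.
Proof.
move=> sXY eY eX sXY' sub xX xX'; have [_ _ _ _ XY'] := sXY'.
have [XX' YY'] := sides_grow sXY sXY' sub xX xX'.
apply: setUSS; apply/subsetP => z z'.
- by rewrite eX; apply/common_nbP => y /(subsetP YY') yY'; rewrite e_sym XY'.
- by rewrite eY; apply/common_nbP => x1 /(subsetP XX') x1X'; rewrite XY'.
Qed.

Lemma closed_biclique (X Y : {set T}) :
  sides e X Y -> Y = common_nb X -> X = common_nb Y -> biclique e (X :|: Y).
Proof.
move=> sXY eY eX; split; first by exists X, Y.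
move=> P' /properP[sub [z zP' zP]] [X' [Y' [eP' sXY']]].
have [X0 _ _ _ _] := sXY; have [x0 x0X] := set0Pn _ X0.
have : x0 \in P' by apply: (subsetP sub); rewrite inE x0X.
rewrite eP' in sub zP' *; rewrite inE => /orP[x0X'|x0Y'].
- by move: zP (subsetP (closed_sides_max sXY eY eX sXY' sub x0X x0X') _ zP') => /negP.
- rewrite [X' :|: Y']setUC in sub zP'.
  by move: zP (subsetP (closed_sides_max sXY eY eX (sidesC sXY') sub x0X x0Y') _ zP') => /negP.
Qed.

Lemma biclique_at (P : {set T}) v : biclique e P -> v \in P ->
  exists X Y, [/\ P = X :|: Y, sides e X Y, v \in X,
                  Y = common_nb X & X = common_nb Y].
Proof.
move=> bP vP; have [X [Y [eP sXY]]] := bP.1.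
have eY := biclique_closed bP eP sXY.
have eX : X = common_nb Y by apply: biclique_closed bP _ (sidesC sXY); rewrite setUC.
move: vP; rewrite eP inE => /orP[vX|vY]; first by exists X, Y.
by exists Y, X; split; rewrite 1?setUC //; exact: sidesC.
Qed.

Definition star (v : T) : {set T} :=
  common_nb (common_nb [set v]) :|: common_nb [set v].

Lemma star_sides v y : e v y ->
  sides e (common_nb (common_nb [set v])) (common_nb [set v]).
Proof.
move=> evy; split.
- by apply/set0Pn; exists v; rewrite (subsetP (common_nb_ext _)) ?set11.
- by apply/set0Pn; exists y; rewrite common_nb1.
- move=> x x' /common_nbP xN /common_nbP x'N; apply/negP => exx'.
  by apply: (e_K3 (x := y) (y := x) (z := x')); split; auto; rewrite ?xN ?x'N ?common_nb1.
- move=> a b; rewrite !common_nb1 => eva evb; apply/negP => eab.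
  by apply: (e_K3 (x := v) (y := a) (z := b)).
- by move=> x n /common_nbP xN nN; rewrite e_sym xN.
Qed.

(* A vertex of a biclique has a neighbour, so its star is a biclique. *)
Lemma star_biclique (P : {set T}) v : biclique e P -> v \in P -> biclique e (star v).
Proof.
move=> bP vP; have [XP [YP [_ [_ YP0 _ _ XY] vX _ _]]] := biclique_at bP vP.
have [y yY] := set0Pn _ YP0.
by apply: closed_biclique (star_sides (XY _ _ vX yY)) _ _; rewrite ?common_nb3.
Qed.

(* Every biclique through v other than the star of v is mutually included
   with it: N(N(v)) is strictly inside X_P and Y_P strictly inside N(v). *)
Lemma mutually_included_star (P : {set T}) v :
  biclique e P -> v \in P -> P != star v -> mutually_included e P (star v).
Proof.
move=> bP vP nPS; have [XP [YP [eP sP vX eY eX]]] := biclique_at bP vP.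
have [_ YP0 _ _ XY] := sP; have [y yY] := set0Pn _ YP0.
set N := common_nb [set v].
have YN : YP \subset N by apply/subsetP => y1 y1Y; rewrite common_nb1 XY.
have YneN : YP != N by apply: contra nPS => /eqP YN'; rewrite eP /star eX YN'.
exists XP, YP, (common_nb N), N; split=> //; first exact: star_sides (XY _ _ vX yY).
split; last by rewrite properEneq YneN.
rewrite properEneq eX common_nb_anti // andbT.
by apply: contra YneN => /eqP XN; rewrite eY eX -XN common_nb3.
Qed.

(* Intersecting bicliques are at distance at most 2 in KB_m(G),
   through the star of a common vertex. *)
Lemma meet_KBm_sq (P Q : {set T}) : biclique e P -> biclique e Q ->
  KB_adj P Q -> KBm_sq_adj e P Q.
Proof.
move=> bP bQ [nPQ /set0Pn[v]]; rewrite inE => /andP[vP vQ].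
split=> //; have bS := star_biclique bP vP.
have mPS := mutually_included_star bP vP; have mQS := mutually_included_star bQ vQ.
have [EP|nPS] := eqVneq P (star v).
  by left; split; rewrite // EP; apply/mutually_included_sym/mQS; rewrite -EP eq_sym.
have [EQ|nQS] := eqVneq Q (star v); first by left; rewrite EQ; split; [rewrite -EQ | exact: mPS].
right; exists (star v); split=> //; first by split; [| exact: mPS].
by split; [rewrite eq_sym | exact/mutually_included_sym/mQS].
Qed.

Lemma KBm_sq_meet (P Q : {set T}) : KBm_sq_adj e P Q -> KB_adj P Q.
Proof.
case=> nPQ [[_ mPQ]|[R [_ [_ mPR] [_ mRQ]]]]; split=> //.
- exact: mutually_included_meet.
- exact: mutually_included_path_meet mPR mRQ.
Qed.

End Bicliques.

Theorem theorem1 (T : finType) (e : rel T) :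
  simple_graph e -> K3_free e ->
  forall P Q : {set T}, biclique e P -> biclique e Q ->
    (KB_adj P Q <-> KBm_sq_adj e P Q).
Proof.
move=> [e_sym e_irr] e_K3 P Q bP bQ; split.
- exact: meet_KBm_sq.
- exact: KBm_sq_meet.
Qed.
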